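(* Let $\alpha_1,\dots,\alpha_4$ be given constants, $H=H(t,t^-,q,q^-,p,p^-)$ a smooth delay Hamiltonian, and $X=\xi(t,q,p)\partial_t+\eta(t,q,p)\partial_q+\nu(t,q,p)\partial_p$ a generator such that the Hamiltonian is invariant, i.e. $$\Omega:=\nu^{-}(\alpha_{1}\dot{q}+\alpha_{2}\dot{q}^{-})+p^{-}(\alpha_{1}D(\eta)+\alpha_{2}D(\eta^{-}))+\nu(\alpha_{3}\dot{q}+\alpha_{4}\dot{q}^{-})+p(\alpha_{3}D(\eta)+\alpha_{4}D(\eta^{-}))+(\alpha_{2}p^{-}+\alpha_{4}p)\dot{q}^{-}D(\xi-\xi^{-})-\xi H_t-\eta H_q-\nu H_p-\xi^{-}H_{t^-}-\eta^{-}H_{q^-}-\nu^{-}H_{p^-}-HD(\xi)=0.$$ Then on the solutions of the local extremal equation $$F_H=\xi\frac{\delta\tilde H}{\delta t}+\eta\frac{\delta\tilde H}{\delta q}+\nu\frac{\delta\tilde H}{\delta p}=0$$ the differential-difference relation $D(C)=(S_+-1)P$ holds, where $C=\eta(\alpha_{4}p^{+}+(\alpha_{2}+\alpha_{3})p+\alpha_{1}p^{-})-\xi\big(\alpha_{2}(p\dot{q}-p^{-}\dot{q}^{-})+\alpha_{4}(p^{+}\dot{q}-p\dot{q}^{-})+H\big)$ and $P=(\alpha_{2}p^{-}+\alpha_{4}p)D(\eta^{-})+\nu^{-}(\alpha_{1}\dot{q}+\alpha_{2}\dot{q}^{-})-(\alpha_{2}p^{-}+\alpha_{4}p)\dot{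q}^{-}D(\xi^{-})-\xi^{-}H_{t^-}-\eta^{-}H_{q^-}-\nu^{-}H_{p^-}$.
   Context: Constant delay $\tau>0$; $t^\pm=t\pm\tau$, and $f^\pm=f(t\pm\tau)$ for functions of $t$; scalar dependent variables $q,p$. $S_\pm$ are the forward/backward shift operators on expressions (shifting all arguments by one step: $S_+$ sends $t^-,t,q^-,q,p^-,p,\dots$ to $t,t^+,q,q^+,p,p^+,\dots$); $\xi^\pm=S_\pm(\xi)$ etc.; $H^+=S_+(H)$. $D$ is the total derivative acting on variables at the points $t^-,t,t^+$ ($D=\partial_t+\dot q\partial_q+\dot p\partial_p+\ddot q\partial_{\dot q}+\cdots$ plus the analogous terms at $t^-$ and $t^+$). $\tilde H=p^{-}(\alpha_{1}\dot{q}+\alpha_{2}\dot{q}^{-})+p(\alpha_{3}\dot{q}+\alpha_{4}\dot{q}^{-})-H$, with $\frac{\delta\tilde H}{\delta p}=\alpha_1\dot q^++(\alpha_2+\alpha_3)\dot q+\alpha_4\dot q^--\partial_p(H+H^+)$, $\frac{\delta\tilde H}{\delta q}=-\big(\alpha_4\dot p^++(\alpha_2+\alpha_3)\dot p+\alpha_1\dot p^-+\partial_q(H+H^+)\big)$, $\frac{\delta\tilde H}{\delta t}=D[\alpha_2(p\dot q-p^-\dot q^-)+\alpha_4(p^+\dot q-p\dot q^-)]+D(H)-\partial_t(H+H^+)$. The equation is considered together with the delay equation $t^+-t=t-t^-=\tau$. The quantity $\Omega$ equals $X(\tilde H)+\tilde HD(\xi)$ for the prolonged generator. *)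

From HB Require Import structures.
From mathcomp Require Import all_boot all_order all_algebra.
From mathcomp Require Import all_classical all_reals all_analysis.
Set Implicit Arguments. Unset Strict Implicit. Unset Printing Implicit Defensive.
Import Order.TTheory GRing.Theory Num.Theory.
Import numFieldNormedType.Exports.
Local Open Scope ring_scope.

Section DelayHam.
Variable R : realType.

(* points of R^6 = (t, t^-, q, q^-, p, p^-) and R^3 = (t, q, p) *)
Definition pt6 (a b c d e f : R) : 'rV[R]_6 := \row_(i < 6) [:: a; b; c; d; e; f]`_i.
Definition pt3 (a b c : R) : 'rV[R]_3 := \row_(i < 3) [:: a; b; c]`_i.

Definition partial n (f : 'rV[R]_n -> R) (i : 'I_n) (x : 'rV[R]_n) : R :=
  'D_(delta_mx 0 i) f x.

Definition i_t  : 'I_6 := @Ordinal 6 0 isT.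
Definition i_tm : 'I_6 := @Ordinal 6 1 isT.
Definition i_q  : 'I_6 := @Ordinal 6 2 isT.
Definition i_qm : 'I_6 := @Ordinal 6 3 isT.
Definition i_p  : 'I_6 := @Ordinal 6 4 isT.
Definition i_pm : 'I_6 := @Ordinal 6 5 isT.

Variables (tau a1 a2 a3 a4 : R) (H : 'rV[R]_6 -> R) (xi eta nu : 'rV[R]_3 -> R).

Section Traj.
(* a trajectory t |-> (q(t), p(t)), with t^- = t - tau, t^+ = t + tau *)
Variables q p : R -> R.

Definition dq := derive1 q.
Definition dp := derive1 p.

Definition zH (t : R) : 'rV[R]_6 :=
  pt6 t (t - tau) (q t) (q (t - tau)) (p t) (p (t - tau)).

(* H, and its partial derivatives, evaluated along the trajectory at time t;
   the "+" shifted version H^+ is Hc (t + tau) etc. *)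
Definition Hc (t : R) : R := H (zH t).
Definition Hd (i : 'I_6) (t : R) : R := partial H i (zH t).

Definition gxi  (t : R) : R := xi  (pt3 t (q t) (p t)).
Definition geta (t : R) : R := eta (pt3 t (q t) (p t)).
Definition gnu  (t : R) : R := nu  (pt3 t (q t) (p t)).

Definition shm (f : R -> R) (t : R) : R := f (t - tau).

Definition Dt (f : R -> R) (t : R) : R := derive1 f t.

(* Omega = X(tilde H) + tilde H D(xi) *)
Definition Omega (t : R) : R :=
  gnu (t - tau) * (a1 * dq t + a2 * dq (t - tau))
  + p (t - tau) * (a1 * Dt geta t + a2 * Dt (shm geta) t)
  + gnu t * (a3 * dq t + a4 * dq (t - tau))
  + p t * (a3 * Dt geta t + a4 * Dt (shm geta) t)
  + (a2 * p (t - tau) + a4 * p t) * dq (t - tau)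
      * Dt (fun s => gxi s - shm gxi s) t
  - gxi t * Hd i_t t - geta t * Hd i_q t - gnu t * Hd i_p t
  - gxi (t - tau) * Hd i_tm t - geta (t - tau) * Hd i_qm t
  - gnu (t - tau) * Hd i_pm t
  - Hc t * Dt gxi t.

Definition Wf (t : R) : R :=
  a2 * (p t * dq t - p (t - tau) * dq (t - tau))
  + a4 * (p (t + tau) * dq t - p t * dq (t - tau)).

(* variational derivatives of tilde H (given in the context) *)
Definition dHt_dt (t : R) : R :=
  Dt Wf t + Dt Hc t - (Hd i_t t + Hd i_tm (t + tau)).
Definition dHt_dq (t : R) : R :=
  - (a4 * dp (t + tau) + (a2 + a3) * dp t + a1 * dp (t - tau)
     + (Hd i_q t + Hd i_qm (t + tau))).
Definition dHt_dp (t : R) : R :=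
  a1 * dq (t + tau) + (a2 + a3) * dq t + a4 * dq (t - tau)
  - (Hd i_p t + Hd i_pm (t + tau)).

Definition FH (t : R) : R :=
  gxi t * dHt_dt t + geta t * dHt_dq t + gnu t * dHt_dp t.

Definition Cf (t : R) : R :=
  geta t * (a4 * p (t + tau) + (a2 + a3) * p t + a1 * p (t - tau))
  - gxi t * (Wf t + Hc t).

Definition Pf (t : R) : R :=
  (a2 * p (t - tau) + a4 * p t) * Dt (shm geta) t
  + gnu (t - tau) * (a1 * dq t + a2 * dq (t - tau))
  - (a2 * p (t - tau) + a4 * p t) * dq (t - tau) * Dt (shm gxi) t
  - gxi (t - tau) * Hd i_tm t - geta (t - tau) * Hd i_qm t
  - gnu (t - tau) * Hd i_pm t.

End Traj.

Definition regular_traj (q p : R -> R) : Prop :=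
  (forall t, derivable q t 1) /\ (forall t, derivable (derive1 q) t 1)
  /\ (forall t, derivable p t 1).

End DelayHam.

From HB Require Import structures.
From mathcomp Require Import all_boot all_order all_algebra.
From mathcomp Require Import all_classical all_reals all_analysis.
From mathcomp Require Import ring.
Import Order.TTheory GRing.Theory Num.Theory.
Import numFieldNormedType.Exports.
Local Open Scope ring_scope.

(* Expanding D(C) by the product rule and moving the delayed derivatives to
   time t shows that along every sufficiently smooth trajectory
     D(C) - (S_+ - 1) P = Omega - F_H :
   the derivatives xi D(W + H) and eta D(a4 p^+ + (a2 + a3) p + a1 p^-) are
   exactly those occurring in xi dH~/dt and eta dH~/dq, and what remains is a
   polynomial identity in the values of xi, eta, nu, p, qdot, pdot and the
   partial derivatives of H at t, t^+ and t^-.  Invariance (Omega = 0) and the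
   extremal equation (F_H = 0) then give the conservation law. *)

Section RealDerivative.
Context {R : realType}.
Implicit Types (f g : R -> R) (c t : R).

Lemma derive1_shift f c t : Dt (fun s => f (s + c)) t = Dt f (t + c).
Proof.
by rewrite /Dt /derive1; under eq_fun do rewrite -addrA.
Qed.

Lemma derivable_shift f c t :
  derivable f (t + c) 1 -> derivable (fun s => f (s + c)) t 1.
Proof.
by rewrite /derivable /= => df; under eq_fun do rewrite -addrA.
Qed.

Lemma derivable_shifted f c t :
  (forall t, derivable f t 1) -> derivable (fun s => f (s + c)) t 1.
Proof. by move=> df; apply: derivable_shift. Qed.

Lemma derivable_const c t : derivable (fun _ : R => c) t 1.
Proof. exact: derivable_cst. Qed.

Lemma derivable_add f g t : derivable f t 1 -> derivable g t 1 ->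
  derivable (fun s => f s + g s) t 1.
Proof. exact: derivableD. Qed.

Lemma derivable_sub f g t : derivable f t 1 -> derivable g t 1 ->
  derivable (fun s => f s - g s) t 1.
Proof. exact: derivableB. Qed.

Lemma derivable_mul f g t : derivable f t 1 -> derivable g t 1 ->
  derivable (fun s => f s * g s) t 1.
Proof. exact: derivableM. Qed.

Lemma DtZ c f t : derivable f t 1 -> Dt (fun s => c * f s) t = c * Dt f t.
Proof. exact: derive1Ml. Qed.

Lemma DtD f g t : derivable f t 1 -> derivable g t 1 ->
  Dt (fun s => f s + g s) t = Dt f t + Dt g t.
Proof. by move=> df dg; rewrite /Dt !derive1E; exact: deriveD. Qed.

Lemma DtB f g t : derivable f t 1 -> derivable g t 1 ->
  Dt (fun s => f s - g s) t = Dt f t - Dt g t.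
Proof. by move=> df dg; rewrite /Dt !derive1E; exact: deriveB. Qed.

Lemma DtM f g t : derivable f t 1 -> derivable g t 1 ->
  Dt (fun s => f s * g s) t = f t * Dt g t + g t * Dt f t.
Proof. by move=> df dg; rewrite /Dt !derive1E; exact: deriveM. Qed.

Lemma differentiable_row_curve n (u : R -> 'rV[R]_n) t :
  (forall i, derivable (fun s => u s 0 i) t 1) -> differentiable u t.
Proof.
move=> du; have -> : u = \sum_(j < n) (fun s => u s 0 j *: delta_mx 0 j).
  by apply/funext => s; rewrite fct_sumE -row_sum_delta.
by apply: differentiable_sum => j; apply: differentiableZl; exact/derivable1_diffP.
Qed.

Lemma derivable_comp_row n (f : 'rV[R]_n -> R) (us : seq (R -> R)) t :
  differentiable f (\row_(i < n) [seq u t | u <- us]`_i) ->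
  (forall i, (i < size us)%N -> derivable (nth (cst 0) us i) t 1) ->
  derivable (fun s => f (\row_(i < n) [seq u s | u <- us]`_i)) t 1.
Proof.
move=> df dus; apply/derivable1_diffP/differentiable_comp; last exact: df.
apply: differentiable_row_curve => i.
have [ilt|ige] := ltnP i (size us).
- by under eq_fun do rewrite mxE (nth_map (cst 0)) //; exact: dus.
- under eq_fun do rewrite mxE nth_default ?size_map //.
  exact: derivable_const.
Qed.

End RealDerivative.

Create HintDb derivable.
Ltac solve_derivable := auto 8 with nocore derivable.
#[export] Hint Resolve derivable_shifted derivable_const derivable_add derivable_sub
  derivable_mul : derivable.

Section ConservationLaw.
Variables (R : realType) (tau a1 a2 a3 a4 : R).
Variables (H : 'rV[R]_6 -> R) (xi eta nu : 'rV[R]_3 -> R).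
Hypotheses (dH : forall x, differentiable H x)
  (dxi : forall x, differentiable xi x) (deta : forall x, differentiable eta x).
Variables q p : R -> R.
Hypotheses (derivable_q : forall t, derivable q t 1)
  (derivable_dq : forall t, derivable (derive1 q) t 1)
  (derivable_p : forall t, derivable p t 1).

Lemma derivable_along (f : 'rV[R]_3 -> R) t : (forall x, differentiable f x) ->
  derivable (fun s => f (pt3 s (q s) (p s))) t 1.
Proof.
move=> df; apply: (@derivable_comp_row _ 3 f [:: id; q; p] t (df _)) => -[|[|[|//]]] _.
- exact: derivable_id.
- exact: derivable_q.
- exact: derivable_p.
Qed.

Lemma derivable_gxi t : derivable (gxi xi q p) t 1.
Proof. exact: derivable_along. Qed.

Lemma derivable_geta t : derivable (geta eta q p) t 1.
Proof. exact: derivable_along. Qed.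

Lemma derivable_Hc t : derivable (Hc tau H q p) t 1.
Proof.
apply: (@derivable_comp_row _ 6 H [:: id; fun s => s - tau; q;
  fun s => q (s - tau); p; fun s => p (s - tau)] t (dH _)) => -[|[|[|[|[|[|//]]]]]] _.
- exact: derivable_id.
- by apply: derivable_sub; [exact: derivable_id | exact: derivable_const].
- exact: derivable_q.
- exact: derivable_shifted.
- exact: derivable_p.
- exact: derivable_shifted.
Qed.

#[local] Hint Resolve derivable_p derivable_dq derivable_gxi derivable_geta
  derivable_Hc : derivable.

Lemma derivable_Wf t : derivable (Wf tau a2 a4 q p) t 1.
Proof. by rewrite /Wf /dq; solve_derivable. Qed.

#[local] Hint Resolve derivable_Wf : derivable.

Lemma Dt_Cf t : Dt (Cf tau a1 a2 a3 a4 H xi eta q p) t =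
  Dt (geta eta q p) t * (a4 * p (t + tau) + (a2 + a3) * p t + a1 * p (t - tau))
  + geta eta q p t * (a4 * dp p (t + tau) + (a2 + a3) * dp p t + a1 * dp p (t - tau))
  - Dt (gxi xi q p) t * (Wf tau a2 a4 q p t + Hc tau H q p t)
  - gxi xi q p t * (Dt (Wf tau a2 a4 q p) t + Dt (Hc tau H q p) t).
Proof.
have DtA : Dt (fun s => a4 * p (s + tau) + (a2 + a3) * p s + a1 * p (s - tau)) t =
    a4 * dp p (t + tau) + (a2 + a3) * dp p t + a1 * dp p (t - tau).
  by rewrite !DtD ?DtZ ?derive1_shift; solve_derivable.
rewrite /Cf DtB ?DtM; solve_derivable.
by rewrite DtA DtD; solve_derivable; ring.
Qed.

Lemma conservation_defectE t :
  Dt (Cf tau a1 a2 a3 a4 H xi eta q p) t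
  - (Pf tau a1 a2 a4 H xi eta nu q p (t + tau) - Pf tau a1 a2 a4 H xi eta nu q p t)
  = Omega tau a1 a2 a3 a4 H xi eta nu q p t - FH tau a1 a2 a3 a4 H xi eta nu q p t.
Proof.
rewrite Dt_Cf /Omega /FH /dHt_dt /dHt_dq /dHt_dp /Pf /shm.
rewrite DtB ?derive1_shift ?addrK; solve_derivable.
rewrite [Wf _ _ _ _ _ t]/Wf.
(* Generalizing the atoms keeps ring from unfolding them when comparing
   (e.g. [Hd i_t t] against [Hd i_q t]), which is prohibitively slow. *)
move: (Dt (Wf tau a2 a4 q p) t) (Dt (Hc tau H q p) t) (Hc tau H q p t).
move: (Dt (gxi xi q p)) (Dt (geta eta q p)).
move: (gxi xi q p) (geta eta q p) (gnu nu q p) (Hd tau H q p) (dq q) (dp p).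
by move=> *; ring.
Qed.

End ConservationLaw.

Theorem theorem5 (R : realType) (tau a1 a2 a3 a4 : R)
    (H : 'rV[R]_6 -> R) (xi eta nu : 'rV[R]_3 -> R) :
  0 < tau ->
  (forall x, differentiable H x) ->
  (forall x, differentiable xi x) ->
  (forall x, differentiable eta x) ->
  (forall x, differentiable nu x) ->
  (* invariance of the Hamiltonian: Omega vanishes identically *)
  (forall q p : R -> R, regular_traj q p ->
     forall t, Omega tau a1 a2 a3 a4 H xi eta nu q p t = 0) ->
  forall q p : R -> R, regular_traj q p ->
  (* (q,p) solves the local extremal equation F_H = 0 *)
  (forall t, FH tau a1 a2 a3 a4 H xi eta nu q p t = 0) ->
  forall t,
    Dt (Cf tau a1 a2 a3 a4 H xi eta q p) t =
    Pf tau a1 a2 a4 H xi eta nu q p (t + tau)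
    - Pf tau a1 a2 a4 H xi eta nu q p t.
Proof.
move=> _ dH dxi deta _ invariant q p regular extremal t.
have [dq [ddq dp]] := regular.
apply/subr0_eq; rewrite conservation_defectE //.
by rewrite invariant // extremal subr0.
Qed.
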